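(* Let $d>3$, and consider Jackson networks with $d$ queues and routing matrix $p_{ij}=p\in(0,1/(d-1))$ for all $i\ne j$ (and $p_{ii}=0$), satisfying: $\lambda_1+\dots+\lambda_d=1$ with $0=\lambda_1<\lambda_i$ for all $i\in\{2,\dots,d\}$; and $\sqrt{\mu_i}-\sqrt{\nu_i}=t>0$ for all $i\in\{1,\dots,d\}$, where $\nu$ is the solution of the traffic equations; assume also hypotheses (A) and (B). Then for every $p>0$ small enough there is $t_p>0$ such that for every $t>t_p$ the equality $$\sup_{\gamma\in\Gamma}\min_{1\le i\le d}\gamma_i\Bigl(\frac{\mu_i}{1+\gamma_i}-\nu_i\Bigr)=\min_{1\le i\le d}\bigl(\sqrt{\mu_i}-\sqrt{\nu_i}\bigr)^2$$ fails to hold.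
   Context: Jackson network with $d$ queues: arrival rates $\lambda_i\ge0$, service rates $\mu_i>0$, routing matrix $P=(p_{ij})_{i,j=1}^d$ nonnegative with $p_{ii}=0$, $\sum_jp_{ij}\le1$, $p_{i0}=1-\sum_jp_{ij}$. Hypothesis (A): the jump-rate kernel on $\mathbb{Z}^d$ (jumps $+\epsilon^i$ at rate $\lambda_i$, $-\epsilon^i$ at rate $\mu_ip_{i0}$, $\epsilon^j-\epsilon^i$ at rate $\mu_ip_{ij}$) is irreducible (equivalently spectral radius of $P$ $<1$ and for every $i$ some $\lambda_jp^{(n)}_{ji}>0$); the traffic equations $\nu_j=\lambda_j+\sum_i\nu_ip_{ij}$ (which depend only on $\lambda$ and $P$) have a unique solution with $\nu_i>0$. Hypothesis (B): $\nu_i<\mu_i$ for all $i$. $Q_{ij}$: probability that the chain on $\{0,\dots,d\}$ with transitions $p_{ij}$ ($0$ absorbing) started at $i$ ever visits $j$ (time $0$ included). For $\gamma\in\mathbb{R}_+^d$, $\overrightarrow{\gamma_i}$ has components $\gamma_i^j=\log(1+Q_{ji}\gamma_i)$; $\Gamma$ is the set of $\gamma\in\mathbb{R}_+^d$ such that for every $i$ and nonzero $v\in\mathbb{R}_+^d$ with $v^i=0$, $\overrightarrow{\gamma_i}\cdot v<\max_j\overrightarrow{\gamma_j}\cdot v$. *)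

From Stdlib Require Import Relations.
From HB Require Import structures.
From mathcomp Require Import all_boot all_order all_algebra.
From mathcomp Require Import all_classical all_reals all_analysis.
Set Implicit Arguments. Unset Strict Implicit. Unset Printing Implicit Defensive.
Import Order.TTheory GRing.Theory Num.Theory.
Import numFieldNormedType.Exports.
Local Open Scope classical_set_scope.
Local Open Scope ring_scope.

Section Jackson.
Variables (R : realType) (d : nat).

Definition unif_routing (p : R) : 'I_d -> 'I_d -> R :=
  fun i j => if i == j then 0 else p.

Definition exit_prob (P : 'I_d -> 'I_d -> R) (i : 'I_d) : R :=
  1 - \sum_(j < d) P i j.

Definition unitZ (i : 'I_d) : 'I_d -> int := fun k => if k == i then 1%Z else 0%Z.

Definition jump_step (lam mu : 'I_d -> R) (P : 'I_d -> 'I_d -> R)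
  (x y : 'I_d -> int) : Prop :=
  exists i : 'I_d,
    (0 < lam i /\ y = (fun k => x k + unitZ i k)%R)
 \/ (0 < mu i * exit_prob P i /\ y = (fun k => x k - unitZ i k)%R)
 \/ (exists j : 'I_d, 0 < mu i * P i j /\
       y = (fun k => x k + unitZ j k - unitZ i k)%R).

Definition hypA (lam mu : 'I_d -> R) (P : 'I_d -> 'I_d -> R) : Prop :=
  forall x y : 'I_d -> int,
    Relation_Operators.clos_refl_trans _ (jump_step lam mu P) x y.

Definition traffic_sol (lam : 'I_d -> R) (P : 'I_d -> 'I_d -> R)
  (nu : 'I_d -> R) : Prop :=
  forall j : 'I_d, nu j = lam j + \sum_(i < d) nu i * P i j.

Definition hypB (mu nu : 'I_d -> R) : Prop := forall i, nu i < mu i.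

(* taboo mass: a_n(k) = P_i(X_n = k, X_m <> j for all m < n), for the
   substochastic chain with transitions p (0 absorbing, not tracked) *)
Fixpoint taboo (P : 'I_d -> 'I_d -> R) (i j : 'I_d) (n : nat) : 'I_d -> R :=
  match n with
  | 0 => fun k => if k == i then 1 else 0
  | n'.+1 => fun k => \sum_(l < d | l != j) taboo P i j n' l * P l k
  end.

(* Q_ij = P_i(chain ever visits j, time 0 included)
        = sum_n P_i(first visit to j at time n) *)
Definition Qhit (P : 'I_d -> 'I_d -> R) (i j : 'I_d) : R :=
  limn (series (fun n => taboo P i j n j) : R ^nat).

Definition gvec (P : 'I_d -> 'I_d -> R) (g : 'I_d -> R) (i j : 'I_d) : R :=
  ln (1 + Qhit P j i * g i).

Definition dotv (u v : 'I_d -> R) : R := \sum_(k < d) u k * v k.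

Definition Gamma (P : 'I_d -> 'I_d -> R) : set ('I_d -> R) :=
  [set g | (forall i, 0 <= g i) /\
     forall (i : 'I_d) (v : 'I_d -> R),
       (forall k, 0 <= v k) -> (exists k, v k != 0) -> v i = 0 ->
       ((dotv (gvec P g i) v)%:E <
          \big[Order.max/-oo%E]_(j < d) (dotv (gvec P g j) v)%:E)%E].

Definition objective (mu nu g : 'I_d -> R) : \bar R :=
  \big[Order.min/+oo%E]_(i < d) (g i * (mu i / (1 + g i) - nu i))%:E.

Definition sup_value (P : 'I_d -> 'I_d -> R) (mu nu : 'I_d -> R) : \bar R :=
  ereal_sup [set objective mu nu g | g in Gamma P].

Definition sqrt_value (mu nu : 'I_d -> R) : \bar R :=
  \big[Order.min/+oo%E]_(i < d) ((Num.sqrt (mu i) - Num.sqrt (nu i)) ^+ 2)%:E.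

End Jackson.

From mathcomp Require Import all_boot all_order all_algebra.
From mathcomp Require Import all_classical all_reals all_analysis.
From mathcomp Require Import ring lra zify.
Set Implicit Arguments. Unset Strict Implicit. Unset Printing Implicit Defensive.
Import Order.TTheory GRing.Theory Num.Theory.
Import numFieldNormedType.Exports.
Local Open Scope ring_scope.

(* For uniform routing the hitting probabilities are explicit: Q_jj = 1 and
   Q_kj = q = p / (1 - (d-2) p) for k <> j.  Since lambda_1 = 0, the traffic
   solution has nu_1 = O(p) while nu_j >= lambda_j / 2 for j <> 1, so for small p
   the number s_1 = sqrt nu_1 is much smaller than every other s_j = sqrt nu_j.
   With mu_i = (s_i + t)^2 one has
     gamma (mu / (1 + gamma) - nu) = t^2 - (t - gamma s)^2 / (1 + gamma),
   so an objective above t^2 - 1 forces gamma_i s_i to lie within a factor 2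
   of t for every i; hence gamma_1 dominates all gamma_j so strongly that on the
   direction v = 1 - e_1 the vector gamma_1-> has the largest scalar product,
   and gamma is not in Gamma.  The supremum is therefore at most
   t^2 - 1 < t^2 = min_i (sqrt mu_i - sqrt nu_i)^2. *)

Lemma objective_term_gap (R : fieldType) (s t g : R) : 1 + g != 0 ->
  g * ((s + t) ^+ 2 / (1 + g) - s ^+ 2) = t ^+ 2 - (t - g * s) ^+ 2 / (1 + g).
Proof. by move=> g1; field. Qed.

Lemma objective_term_window (R : realFieldType) (s t g : R) :
  0 < s -> 0 <= g -> 4 <= s * t -> 3 <= t ->
  t ^+ 2 - 1 < g * ((s + t) ^+ 2 / (1 + g) - s ^+ 2) ->
  t <= 2 * g * s /\ g * s <= 2 * t.
Proof.
move=> s_gt0 g_ge0 st_ge4 t_ge3.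
have g1_gt0 : 0 < 1 + g by lra.
rewrite objective_term_gap ?gt_eqF // => term_gt.
have {term_gt} gap_lt : (t - g * s) ^+ 2 < 1 + g.
  by rewrite -[1 + g]mul1r -ltr_pdivrMr //; lra.
split; rewrite leNgt; apply/negP => h.
- have : t ^+ 2 / 4 < (t - g * s) ^+ 2 by nra.
  nra.
- nra.
Qed.

(* 512 = 8 * 4^3: the factor 8 is what [ln_hit_dominance] needs, and 4^3 absorbs
   the factor-4 slack of the window [t/2 <= g s <= 2 t]. *)
Lemma cube_ratio_window (R : realFieldType) (q s0 s1 g0 g1 : R) :
  0 <= s0 -> 0 < s1 -> 0 <= g0 -> 0 <= g1 ->
  g1 * s1 <= 4 * (g0 * s0) -> 512 * s0 ^+ 3 <= q * s1 ^+ 3 ->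
  8 * g1 ^+ 3 <= q * g0 ^+ 3.
Proof.
move=> s0_ge0 s1_gt0 g0_ge0 g1_ge0 gs_le s_le.
have cube_le : (g1 * s1) ^+ 3 <= (4 * (g0 * s0)) ^+ 3.
  by rewrite ler_pXn2r // nnegrE; nra.
have s1_cube : 0 < s1 ^+ 3 by apply: exprn_gt0.
rewrite -(ler_pM2r s1_cube).
have g0_cube : 0 <= g0 ^+ 3 by apply: exprn_ge0.
rewrite !exprMn in cube_le.
have -> : q * g0 ^+ 3 * s1 ^+ 3 = g0 ^+ 3 * (q * s1 ^+ 3) by ring.
apply: le_trans (ler_wpM2l g0_cube s_le).
have e64 : (4 : R) ^+ 3 = 64 by rewrite !exprS expr0; ring.
rewrite e64 in cube_le.
nra.
Qed.

Lemma ln_hit_dominance (R : realType) (D q g0 g1 : R) :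
  3 <= D -> 0 < q -> q <= 1 -> 0 <= g0 -> 1 <= q * g1 -> 8 * g1 ^+ 3 <= q * g0 ^+ 3 ->
  D * ln (1 + q * g1) + (ln (1 + g1) - ln (1 + q * g1)) <= D * ln (1 + q * g0).
Proof.
move=> D_ge3 q_gt0 q_le1 g0_ge0 qg1_ge1 cube_le.
have g1_ge1 : 1 <= g1 by nra.
have g0_cube : 0 <= g0 ^+ 3 by apply: exprn_ge0.
have g1_cube : 0 <= g1 ^+ 3 by apply: exprn_ge0; lra.
have g1_le : g1 <= g0 by rewrite -(@ler_pXn2r _ 3) ?nnegrE //; nra.
have prod_le : (1 + g1) * (1 + q * g1) ^+ 2 <= (1 + q * g0) ^+ 3.
  have sq_le : (1 + q * g1) ^+ 2 <= (2 * (q * g1)) ^+ 2.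
    by rewrite ler_pXn2r ?nnegrE //; nra.
  have cubic_le : (1 + g1) * (1 + q * g1) ^+ 2 <= 8 * q ^+ 2 * g1 ^+ 3.
    have -> : 8 * q ^+ 2 * g1 ^+ 3 = 2 * g1 * (2 * (q * g1)) ^+ 2 by ring.
    by apply: ler_pM => //; [lra | apply: sqr_ge0 | lra].
  apply: le_trans cubic_le _; apply: (@le_trans _ _ ((q * g0) ^+ 3)).
    by have := sqr_ge0 q; rewrite exprMn; nra.
  by rewrite ler_pXn2r ?nnegrE //; nra.
have pos (x : R) : 0 <= x -> 1 + x \is Num.pos by move=> ?; rewrite posrE; lra.
have qg_le : q * g1 <= q * g0 by rewrite ler_wpM2l //; lra.
have lnq_le : ln (1 + q * g1) <= ln (1 + q * g0) by rewrite ler_ln ?pos //; lra.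
have ln_prod : ln (1 + g1) + 2 * ln (1 + q * g1) <= 3 * ln (1 + q * g0).
  move: prod_le; rewrite -ler_ln ?posrE ?mulr_gt0 ?exprn_gt0 //; try lra.
  by rewrite lnM ?pos ?posrE ?exprn_gt0 ?lnXn //; lra.
have : 0 <= (D - 3) * (ln (1 + q * g0) - ln (1 + q * g1)) by apply: mulr_ge0; lra.
lra.
Qed.

Lemma exists_pos_lower_bound (R : realDomainType) (I : finType) (P : pred I)
    (f : I -> R) :
  (forall i, P i -> 0 < f i) -> exists2 m, 0 < m & forall i, P i -> m <= f i.
Proof.
move=> f_gt0; exists (\big[Num.min/1]_(i | P i) f i).
  by apply: (big_ind (fun x => 0 < x)) => // x y; rewrite lt_min => -> ->.
by move=> i Pi; rewrite (bigD1 i) //= ge_min lexx.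
Qed.

Lemma sumr_const_neq (V : nmodType) (d : nat) (j : 'I_d) (x : V) :
  \sum_(k < d | k != j) x = x *+ d.-1.
Proof. by rewrite sumr_const cardC1 card_ord. Qed.

Section UniformRouting.
Variables (R : realType) (d : nat) (p : R).
Local Notation P := (@unif_routing R d p).

Lemma sumr_unif_routing (l : 'I_d) : \sum_(k < d) P l k = p *+ d.-1.
Proof.
rewrite (bigD1 l) //= /unif_routing eqxx add0r -(sumr_const_neq l).
by apply: eq_bigr => k /negbTE; rewrite eq_sym => ->.
Qed.

Lemma sumr_unif_routing_neq (l j : 'I_d) : l != j ->
  \sum_(k < d | k != j) P l k = p *+ d.-2.
Proof.
move=> lj; have := sumr_unif_routing l.
have d2 : (1 < d)%N.
  by move: (ltn_ord l) (ltn_ord j) lj; rewrite -val_eqE /=; lia.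
have -> : d.-1 = d.-2.+1 by lia.
by rewrite (bigD1 j) //= {1}/unif_routing (negbTE lj) mulrS => /addrI.
Qed.

Lemma taboo_avoid_mass (k j : 'I_d) n : k != j ->
  \sum_(l < d | l != j) taboo P k j n l = (p *+ d.-2) ^+ n.
Proof.
move=> kj; elim: n => [|n IHn] /=.
  by rewrite (bigD1 k) //= eqxx big1 ?addr0 // => l /andP[_ /negbTE ->].
rewrite exchange_big /= exprS mulrC -IHn big_distrl /=.
by apply: eq_bigr => l lj; rewrite -big_distrr /= sumr_unif_routing_neq.
Qed.

Lemma taboo_first_hit (k j : 'I_d) n : k != j ->
  taboo P k j n.+1 j = p * (p *+ d.-2) ^+ n.
Proof.
move=> kj /=; rewrite -(taboo_avoid_mass n kj) big_distrr /=.
by apply: eq_bigr => l lj; rewrite /unif_routing (negbTE lj) mulrC.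
Qed.

Lemma taboo_from_target (j k : 'I_d) n : taboo P j j n.+1 k = 0.
Proof.
elim: n k => [|n IHn] k; first by rewrite /= big1 // => l /negbTE ->; rewrite mul0r.
change (\sum_(l < d | l != j) taboo P j j n.+1 l * P l k = 0).
by rewrite big1 // => l _; rewrite IHn mul0r.
Qed.

Lemma Qhit_unif_diag (j : 'I_d) : Qhit P j j = 1.
Proof.
apply: cvg_lim; first exact: Rhausdorff.
rewrite -cvg_shiftS; apply: cvg_near_cst; near=> n.
rewrite /series /= big_nat_recl //= eqxx big1 ?addr0 // => i _.
exact: taboo_from_target.
Unshelve. all: end_near.
Qed.

Lemma Qhit_unif_offdiag (k j : 'I_d) : k != j -> 0 <= p -> p *+ d.-2 < 1 ->
  Qhit P k j = p / (1 - p *+ d.-2).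
Proof.
move=> kj p_ge0 r_lt1; apply: cvg_lim; first exact: Rhausdorff.
rewrite -cvg_shiftS.
have -> : [sequence series (fun n => taboo P k j n j) n.+1]_n =
          series (geometric p (p *+ d.-2)).
  apply/funext => n /=; rewrite /series /= big_nat_recl //= eq_sym (negbTE kj) add0r.
  by apply: eq_bigr => i _; rewrite -(taboo_first_hit i kj).
by apply: cvg_geometric_series; rewrite ger0_norm // mulrn_wge0.
Qed.
End UniformRouting.

Lemma not_Gamma_dominant (R : realType) (d : nat) (P : 'I_d -> 'I_d -> R)
    (g v : 'I_d -> R) (i : 'I_d) :
  (forall k, 0 <= v k) -> (exists k, v k != 0) -> v i = 0 ->
  (forall j, dotv (gvec P g j) v <= dotv (gvec P g i) v) -> ~ Gamma P g.
Proof.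
move=> v_ge0 v_neq0 vi0 dominant [_ /(_ i v v_ge0 v_neq0 vi0)].
apply/negP; rewrite -leNgt; apply: (big_ind (fun x => x <= _)%E) => //.
- exact: leNye.
- by move=> x y x_le y_le; rewrite ge_max x_le y_le.
- by move=> j _; rewrite lee_fin.
Qed.

Lemma sup_value_le (R : realType) (d : nat) (P : 'I_d -> 'I_d -> R)
    (mu nu : 'I_d -> R) (c : R) :
  (forall g, Gamma P g -> ~ (forall i, c < g i * (mu i / (1 + g i) - nu i))) ->
  (sup_value P mu nu <= c%:E)%E.
Proof.
move=> bounded; apply: ge_ereal_sup => _ [g Gamma_g <-].
rewrite leNgt; apply/negP => c_lt; apply: (bounded g Gamma_g) => i.
by rewrite -lte_fin (lt_le_trans c_lt) // /objective (bigD1 i) //= ge_min lexx.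
Qed.

Lemma sqrt_value_ge (R : realType) (d : nat) (mu nu : 'I_d -> R) (c : R) :
  (forall i, c <= (Num.sqrt (mu i) - Num.sqrt (nu i)) ^+ 2) ->
  (c%:E <= sqrt_value mu nu)%E.
Proof.
move=> c_le; apply: (big_ind (fun x => c%:E <= x)%E) => //.
- exact: leey.
- by move=> x y x_ge y_ge; rewrite le_min x_ge y_ge.
- by move=> i _; rewrite lee_fin.
Qed.

Section UniformGamma.
Variables (R : realType) (d : nat) (p q : R) (i0 : 'I_d).
Hypothesis Qhit_offdiag : forall k j : 'I_d, k != j -> Qhit (@unif_routing R d p) k j = q.
Local Notation P := (@unif_routing R d p).
Local Notation v := (fun k : 'I_d => if k == i0 then 0 else 1 : R).

Lemma dotv_gvec_unif (g : 'I_d -> R) (j : 'I_d) :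
  dotv (gvec P g j) v = ln (1 + q * g j) *+ d.-1 +
    (if j == i0 then 0 else ln (1 + g j) - ln (1 + q * g j)).
Proof.
rewrite /dotv (bigD1 i0) //= eqxx mulr0 add0r -(sumr_const_neq i0).
under eq_bigr => k k_neq do rewrite (negbTE k_neq) mulr1.
case: eqVneq => [->|j_neq].
  by rewrite addr0; apply: eq_bigr => k k_neq; rewrite /gvec Qhit_offdiag.
rewrite (bigD1 j) //= [in RHS](bigD1 j) //= /gvec Qhit_unif_diag mul1r.
under eq_bigr => k /andP[_ k_neq] do rewrite Qhit_offdiag //.
by ring.
Qed.

Lemma not_Gamma_unif (g : 'I_d -> R) :
  (3 < d)%N -> 0 < q -> q <= 1 -> 0 <= g i0 ->
  (forall j, j != i0 -> 1 <= q * g j /\ 8 * g j ^+ 3 <= q * g i0 ^+ 3) ->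
  ~ Gamma P g.
Proof.
move=> d_gt3 q_gt0 q_le1 g0_ge0 g_small.
have /card_gt0P [i1 /[!inE] i1_neq] : (0 < #|predC1 i0|)%N by rewrite cardC1 card_ord; lia.
apply: (@not_Gamma_dominant _ _ _ g v i0) => [k|||j]; first by case: ifP.
- by exists i1; rewrite (negbTE i1_neq) oner_neq0.
- by rewrite eqxx.
rewrite !dotv_gvec_unif eqxx addr0; case: (eqVneq j i0) => [->|j_neq]; first by rewrite addr0.
have [qg_ge1 cube_le] := g_small j j_neq.
have D_ge3 : 3 <= d.-1%:R :> R by rewrite (ler_nat R 3); lia.
by have := ln_hit_dominance D_ge3 q_gt0 q_le1 g0_ge0 qg_ge1 cube_le; rewrite !mulr_natl.
Qed.
End UniformGamma.

Lemma traffic_unif (R : realType) (d : nat) (lam nu : 'I_d -> R) (p : R) :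
  traffic_sol lam (@unif_routing R d p) nu ->
  (forall j, nu j * (1 + p) = lam j + p * \sum_(i < d) nu i) /\
  (\sum_(i < d) nu i) * (1 - (d%:R - 1) * p) = \sum_(i < d) lam i.
Proof.
move=> traffic.
have nu_eq j : nu j * (1 + p) = lam j + p * \sum_(i < d) nu i.
  have := traffic j; rewrite (bigD1 j) //= /unif_routing eqxx mulr0 add0r.
  under eq_bigr => i /negbTE ij do rewrite ij.
  rewrite -big_distrl /= [in X in _ = _ + p * X](bigD1 j) //= => nu_j.
  by rewrite mulrDr mulr1 {1}nu_j; ring.
split=> //; have := congr1 (fun f => \sum_(j < d) f j) (funext nu_eq) => /=.
rewrite -big_distrl big_split sumr_const card_ord -(mulr_natr (p * _)) /= => sum_eq.
by rewrite -[RHS](addrK ((p * \sum_(i < d) nu i) * d%:R)) -sum_eq; ring.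
Qed.

Section LargeGap.
Variables (R : realType) (d : nat) (lam mu nu : 'I_d -> R) (i0 : 'I_d) (m p t : R).
Hypotheses (d_gt3 : (3 < d)%N) (lam_sum : \sum_(i < d) lam i = 1)
  (lam_ge0 : forall j, 0 <= lam j) (lam_i0 : lam i0 = 0)
  (m_gt0 : 0 < m) (lam_ge_m : forall j, j != i0 -> m <= lam j)
  (p_gt0 : 0 < p) (p_small : 2 * (d%:R - 1) * p <= 1) (p_le_m : 8 ^+ 8 * p <= m ^+ 3)
  (pt_gt : 10 < p * t)
  (traffic : traffic_sol lam (@unif_routing R d p) nu)
  (nu_gt0 : forall j, 0 < nu j) (mu_ge0 : forall j, 0 <= mu j)
  (sqrt_gap : forall j, Num.sqrt (mu j) - Num.sqrt (nu j) = t).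

(* [lra] and [nra] ignore section hypotheses and [Let] facts, so the proofs
   below first copy the ones they need into the local context. *)

Local Notation P := (@unif_routing R d p).
Local Notation N := (\sum_(i < d) nu i).
Local Notation s j := (Num.sqrt (nu j)).
Local Notation q := (p / (1 - p *+ d.-2)).

Let d_ge4 : (4 : R) <= d%:R. Proof. by rewrite (ler_nat R 4). Qed.

Let p_le1 : p <= 1.
Proof.
have d4 := d_ge4.
have : 6 * p <= 2 * (d%:R - 1) * p by rewrite ler_pM2r //; lra.
move/le_trans/(_ p_small); lra.
Qed.

Let nu_eq : forall j, nu j * (1 + p) = lam j + p * N.
Proof. by have [] := traffic_unif traffic. Qed.

Let N_bounds : 1 <= N <= 2.
Proof.
have [_] := traffic_unif traffic; rewrite lam_sum => N_eq.
have N_ge0 : 0 <= N by apply: sumr_ge0 => i _; apply: ltW.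
have a_ge0 : 0 <= (d%:R - 1) * p by apply: mulr_ge0; [have := d_ge4; lra | apply: ltW].
move: N_eq a_ge0 (p_small); rewrite -mulrA; set a := (d%:R - 1) * p => N_eq a_ge0 a_le.
by apply/andP; split; nra.
Qed.

Let nu_bounds j : p / 2 <= nu j <= 2.
Proof.
have := nu_eq j; have := lam_ge0 j; have := N_bounds => /andP[N_ge1 N_le2].
have : nu j <= N by rewrite (bigD1 j) //= lerDl; apply: sumr_ge0 => i _; apply: ltW.
have := p_le1; have := nu_gt0 j.
by move=> *; apply/andP; split; nra.
Qed.

Let nu_i0_le : nu i0 <= 2 * p.
Proof.
have nu_i0 := nu_eq i0; rewrite lam_i0 add0r in nu_i0.
apply: (@le_trans _ _ (nu i0 * (1 + p))).
  by rewrite ler_peMr ?lerDl ?(ltW p_gt0) ?(ltW (nu_gt0 i0)).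
by rewrite nu_i0 mulrC ler_pM2r //; case/andP: N_bounds.
Qed.

Let nu_ge_lam j : lam j <= 2 * nu j.
Proof.
have := nu_eq j; have pN_ge0 : 0 <= p * N.
  by apply: mulr_ge0; [apply: ltW | apply: sumr_ge0 => i _; apply: ltW].
have : nu j * p <= nu j by rewrite ler_piMr // ltW.
by move=> *; lra.
Qed.

Let routing_mass : 2 * (p *+ d.-2 + p) <= 1.
Proof.
have -> : p *+ d.-2 + p = p *+ d.-1 by rewrite -mulrSr; congr (_ *+ _); lia.
by rewrite -(mulr_natl p) -subn1 natrB ?mulrA //; lia.
Qed.

Let q_bounds : p <= q <= 1.
Proof.
move: routing_mass (mulrn_wge0 d.-2 (ltW p_gt0)); move: (p *+ d.-2) => r r_le r_ge0.
have p_pos := p_gt0; have r_lt1 : 0 < 1 - r by lra.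
by rewrite ler_pdivlMr // ler_pdivrMr //; apply/andP; split; nra.
Qed.

Let Qhit_offdiag k j : k != j -> Qhit P k j = q.
Proof.
move=> kj; apply: Qhit_unif_offdiag => //; first exact: ltW.
by move: routing_mass (p_gt0); move: (p *+ d.-2) => r; lra.
Qed.

Let sqrt_nu_ratio j : j != i0 -> 512 * s i0 ^+ 3 <= q * s j ^+ 3.
Proof.
move=> j_neq; have s_sq k : s k ^+ 2 = nu k by rewrite sqr_sqrtr // ltW.
have s_cube_ge0 k : 0 <= s k ^+ 3 by rewrite exprn_ge0 ?sqrtr_ge0.
have [p_le_q _] := andP q_bounds.
have p_pos := p_gt0; have cube_bound := p_le_m; have m_pos := m_gt0.
have q_ge0 : 0 <= q := le_trans (ltW p_pos) p_le_q.
have lhs_ge0 : 0 <= 512 * s i0 ^+ 3 by rewrite mulr_ge0.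
have rhs_ge0 : 0 <= q * s j ^+ 3 by rewrite mulr_ge0.
rewrite -(@ler_pXn2r _ 2) ?nnegrE //.
have -> : (512 * s i0 ^+ 3) ^+ 2 = 8 ^+ 6 * (s i0 ^+ 2) ^+ 3 by ring.
have -> : (q * s j ^+ 3) ^+ 2 = q ^+ 2 * (s j ^+ 2) ^+ 3 by ring.
rewrite !s_sq.
have nu_i0_cube : nu i0 ^+ 3 <= (2 * p) ^+ 3.
  by rewrite ler_pXn2r ?nnegrE //; [apply: ltW | lra].
have nu_j_cube : (m / 2) ^+ 3 <= nu j ^+ 3.
  have := lam_ge_m j_neq; have := nu_ge_lam j; have := nu_gt0 j => *.
  by rewrite ler_pXn2r ?nnegrE //; lra.
have p_q_sq : p ^+ 2 <= q ^+ 2 by rewrite ler_pXn2r ?nnegrE //; lra.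
apply: (le_trans (ler_wpM2l _ nu_i0_cube)); first exact: exprn_ge0.
apply: (@le_trans _ _ (p ^+ 2 * (m / 2) ^+ 3)).
  have := ler_wpM2l (sqr_ge0 p) cube_bound.
  lra.
by apply: ler_pM => //; [apply: sqr_ge0 | apply: exprn_ge0; lra].
Qed.

Let sqrt_nu_bounds j : p / 2 <= s j <= 2.
Proof.
have s_sq : s j ^+ 2 = nu j by rewrite sqr_sqrtr // ltW.
have s_ge0 : 0 <= s j := sqrtr_ge0 _.
have /andP[nu_ge nu_le] := nu_bounds j; have p_pos := p_gt0; have p1 := p_le1.
by apply/andP; split; rewrite -(@ler_pXn2r _ 2) ?nnegrE ?s_sq //; nra.
Qed.

Let mu_eq j : mu j = (s j + t) ^+ 2.
Proof. by rewrite -(sqr_sqrtr (mu_ge0 j)) -(sqrt_gap j) addrC subrK. Qed.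

Let large_objective_window (g : 'I_d -> R) :
  (forall i, 0 <= g i) ->
  (forall i, t ^+ 2 - 1 < g i * (mu i / (1 + g i) - nu i)) ->
  forall j, t <= 2 * g j * s j /\ g j * s j <= 2 * t.
Proof.
move=> g_ge0 large j; have := sqrt_nu_bounds j => /andP[s_ge _].
have p_pos := p_gt0; have p1 := p_le1; have pt := pt_gt.
have := large j; rewrite mu_eq -{2}(sqr_sqrtr (ltW (nu_gt0 j))).
by apply: objective_term_window => //; nra.
Qed.

Lemma sup_value_le_gap : (sup_value P mu nu <= (t ^+ 2 - 1)%:E)%E.
Proof.
apply: sup_value_le => g Gamma_g large.
have g_ge0 := Gamma_g.1; have window := large_objective_window g_ge0 large.
have [p_le_q q_le1] := andP q_bounds; have p_pos := p_gt0; have pt := pt_gt.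
apply: (not_Gamma_unif Qhit_offdiag d_gt3 _ q_le1 (g_ge0 i0) _ Gamma_g); first lra.
move=> j j_neq; have [t_le_j j_le_t] := window j; have [t_le_0 _] := window i0.
have /andP[_ s_le2] := sqrt_nu_bounds j.
have gj_ge0 := g_ge0 j; have t_le : t <= 4 * g j by nra.
split; first nra.
apply: cube_ratio_window (sqrt_nu_ratio j_neq); rewrite ?sqrtr_ge0 ?sqrtr_gt0 //; lra.
Qed.

Lemma sup_value_lt_sqrt_value : (sup_value P mu nu < sqrt_value mu nu)%E.
Proof.
apply: le_lt_trans sup_value_le_gap _.
apply: (@lt_le_trans _ _ (t ^+ 2)%:E); first by rewrite lte_fin; lra.
by apply: sqrt_value_ge => i; rewrite sqrt_gap.
Qed.

End LargeGap.

Theorem proposition3p5 (R : realType) (d : nat) (lam : 'I_d -> R) :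
  (3 < d)%N ->
  \sum_(i < d) lam i = 1 ->
  (forall i : 'I_d, (i : nat) = 0%N -> lam i = 0) ->
  (forall i : 'I_d, (i : nat) <> 0%N -> 0 < lam i) ->
  exists p0 : R, 0 < p0 /\
    forall p : R, 0 < p -> p < p0 -> p < (d.-1%:R)^-1 ->
    exists tp : R, 0 < tp /\
      forall (t : R) (mu nu : 'I_d -> R),
        tp < t ->
        (forall i, 0 < mu i) ->
        traffic_sol lam (@unif_routing R d p) nu ->
        (forall nu', traffic_sol lam (@unif_routing R d p) nu' -> nu' = nu) ->
        (forall i, 0 < nu i) ->
        (forall i, Num.sqrt (mu i) - Num.sqrt (nu i) = t) ->
        hypA lam mu (@unif_routing R d p) ->
        hypB mu nu ->
        sup_value (@unif_routing R d p) mu nu <> sqrt_value mu nu.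
Proof.
move=> d_gt3 lam_sum lam_first lam_rest.
pose i0 : 'I_d := Ordinal (ltn_trans (isT : 0 < 3)%N d_gt3).
have lam_pos j : j != i0 -> 0 < lam j.
  by move=> j_neq; apply: lam_rest => j0; move: j_neq; rewrite -val_eqE /= j0.
have lam_ge0 j : 0 <= lam j.
  by case: (eqVneq j i0) => [->|/lam_pos/ltW //]; rewrite lam_first.
have [m m_gt0 lam_ge_m] := exists_pos_lower_bound lam_pos.
have d_ge4 : (4 : R) <= d%:R by rewrite (ler_nat R 4).
have scale_gt0 : 0 < 2 * (d%:R - 1) :> R by lra.
exists (Num.min (2 * (d%:R - 1))^-1 (m ^+ 3 / 8 ^+ 8)); split.
  by rewrite lt_min invr_gt0 scale_gt0 divr_gt0 ?exprn_gt0.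
move=> p p_gt0; rewrite lt_min -div1r !ltr_pdivlMr ?exprn_gt0 // => /andP[p_small p_le_m] _.
exists (10 / p); split=> [|t mu nu t_gt mu_gt0 traffic _ nu_gt0 sqrt_gap _ _].
  by rewrite divr_gt0.
apply/eqP; rewrite lt_eqF //.
apply: (sup_value_lt_sqrt_value d_gt3 lam_sum lam_ge0 (lam_first i0 erefl) m_gt0
  lam_ge_m p_gt0 _ _ _ traffic nu_gt0 (fun j => ltW (mu_gt0 j)) sqrt_gap).
- by apply: ltW; rewrite mulrC; exact: p_small.
- by apply: ltW; rewrite mulrC; exact: p_le_m.
- by rewrite mulrC -ltr_pdivrMr.
Qed.
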